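(* Consider Algorithm 3 (described in the context) under the Standing Assumption, Matrix Assumption and Gradient Assumption of the context. For all $k\in\mathbb{N}$, $$g_k^Td_k\ge\mathbb{E}_k[\bar g_k^T\bar d_k]\ge g_k^Td_k-\zeta^{-1}M\qquad\text{and}\qquad d_k^TH_kd_k\le\mathbb{E}_k[\bar d_k^TH_k\bar d_k].$$
   Context: Problem: $\min_x f(x)$ s.t. $c(x)=0$, $f(x)=\mathbb{E}[F(x,\omega)]$, $c:\mathbb{R}^n\to\mathbb{R}^m$ deterministic. Notation: $g_k=\nabla f(x_k)$, $c_k=c(x_k)$, $J_k=\nabla c(x_k)^T$; $\Delta q(x,\tau,g,H,d)=-\tau(g^Td+\frac12\max\{d^THd,0\})+\|c(x)\|_1$. Standing Assumption: an open convex set $\mathcal X$ contains all iterates; $f$ is $C^1$, bounded below on $\mathcal X$, $\nabla f$ bounded and $L$-Lipschitz on $\mathcal X$; $c$, $\nabla c^T$ bounded on $\mathcal X$; $\nabla c_i$ is $\gamma_i$-Lipschitz on $\mathcal X$; singular values of $\nabla c(x)^T$ bounded away from zero uniformly over $\mathcal X$; $\Gamma:=\sum_i\gamma_i$. Matrix Assumption: deterministic symmetric $H_k$, chosen independently of the stochastic gradients, with $\|H_k\|_2\le\kappa_H$ and $u^TH_ku\ge\zeta\|u\|_2^2$ whenever $J_ku=0$. Algorithm 3 (inputs $x_0$, $\bar\tau_{-1}>0$, $\epsilon,\sigma\in(0,1)$, $\bar\xi_{-1}>0$, $\{\beta_k\}\subset(0,1]$, $\theta\ge0$): at iteration $k$,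 obtain stochastic gradient $\bar g_k$; $(\bar d_k,\bar y_k)$ solves $H_k\bar d_k+J_k^T\bar y_k=-\bar g_k$, $J_k\bar d_k=-c_k$ (assumed $\bar d_k\neq0$). $\bar\tau_k^{trial}=\infty$ if $\bar g_k^T\bar d_k+\max\{\bar d_k^TH_k\bar d_k,0\}\le0$, else $\frac{(1-\sigma)\|c_k\|_1}{\bar g_k^T\bar d_k+\max\{\bar d_k^TH_k\bar d_k,0\}}$; $\bar\tau_k=\bar\tau_{k-1}$ if $\bar\tau_{k-1}\le\bar\tau_k^{trial}$, else $(1-\epsilon)\bar\tau_k^{trial}$. $\bar\xi_k^{trial}=\frac{\Delta q(x_k,\bar\tau_k,\bar g_k,H_k,\bar d_k)}{\bar\tau_k\|\bar d_k\|_2^2}$; $\bar\xi_k=\bar\xi_{k-1}$ if $\bar\xi_{k-1}\le\bar\xi_k^{trial}$, else $(1-\epsilon)\bar\xi_k^{trial}$. With $D_k=(\bar\tau_kL+\Gamma)\|\bar d_k\|_2^2$, $\hat a_k=\beta_k\Delta q(x_k,\bar\tau_k,\bar g_k,H_k,\bar d_k)/D_k$, $\tilde a_k=\hat a_k-4\|c_k\|_1/D_k$, project both onto $[a_k,a_k+\theta\beta_k^2]$ with $a_k=\frac{\beta_k\bar\xi_k\bar\tau_k}{\bar\tau_kL+\Gamma}$ to get $\widehat\alpha_k,\widetilde\alpha_k$; $\bar\alpha_k=\widehat\alpha_k$ if $\widehat\alpha_k<1$, $1$ if $\widetilde\alpha_k\le1\le\widehat\alpha_k$, $\widetilde\alpha_k$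 if $\widetilde\alpha_k>1$; $x_{k+1}=x_k+\bar\alpha_k\bar d_k$. Gradient Assumption: $\mathbb{E}_k[\bar g_k]=g_k$ and $\mathbb{E}_k[\|\bar g_k-g_k\|_2^2]\le M$, where $\mathbb{E}_k$ is expectation w.r.t. $\omega$ conditioned on the algorithm having reached $x_k$ at iteration $k$. Deterministic counterpart: $(d_k,y_k)$ solves $H_kd_k+J_k^Ty_k=-g_k$, $J_kd_k=-c_k$. *)

From HB Require Import structures.
From mathcomp Require Import all_boot all_order all_algebra.
From mathcomp Require Import all_classical all_reals all_analysis.
Set Implicit Arguments. Unset Strict Implicit. Unset Printing Implicit Defensive.
Import Order.TTheory GRing.Theory Num.Theory.
Local Open Scope ring_scope.

Definition dotv {R : realType} {n : nat} (u v : 'cV[R]_n) : R := (u^T *m v) 0 0.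
Definition sqnorm {R : realType} {n : nat} (u : 'cV[R]_n) : R := dotv u u.

From HB Require Import structures.
From mathcomp Require Import all_boot all_order all_algebra.
From mathcomp Require Import all_classical all_reals all_analysis.
From mathcomp Require Import ring lra measurable_realfun measurable_fun_approximation.
Import Order.TTheory GRing.Theory Num.Theory.
Local Open Scope ring_scope.

(* Both search directions solve a KKT system with the same matrix
   K = [H J^T; J 0], which is nonsingular because H is definite on ker J and
   J^T is injective.  Hence the step error e = dbar - d satisfies J e = 0 and
   is a fixed linear image -W (gbar - g) of the gradient noise.  Expanding,
   gbar^T dbar and dbar^T H dbar are their deterministic values plus a term
   linear in the noise, whose expectation vanishes, minus (resp. plus)
   q = e^T H e.  The KKT equations give q = -(gbar - g)^T e, and together with
   zeta |e|^2 <= q this yields 0 <= q <= |gbar - g|^2 / zeta, whose expectation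
   is at most M / zeta. *)

Section InnerProduct.
Context {R : realType} {n : nat}.
Implicit Types (u v w : 'cV[R]_n).

Lemma dotvE u v : dotv u v = \sum_i u i 0 * v i 0.
Proof. by rewrite /dotv mxE; apply: eq_bigr => i _; rewrite mxE. Qed.

Lemma dotvC u v : dotv u v = dotv v u.
Proof. by rewrite !dotvE; apply: eq_bigr => i _; rewrite mulrC. Qed.

Lemma dotvDl u w v : dotv (u + w) v = dotv u v + dotv w v.
Proof. by rewrite !dotvE -big_split; apply: eq_bigr => i _; rewrite mxE mulrDl. Qed.

Lemma dotvDr v u w : dotv v (u + w) = dotv v u + dotv v w.
Proof. by rewrite dotvC dotvDl !(dotvC v). Qed.

Lemma dotvZl a u v : dotv (a *: u) v = a * dotv u v.
Proof. by rewrite !dotvE mulr_sumr; apply: eq_bigr => i _; rewrite mxE mulrA. Qed.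

Lemma dotvZr a v u : dotv v (a *: u) = a * dotv v u.
Proof. by rewrite dotvC dotvZl dotvC. Qed.

Lemma dotvNl u v : dotv (- u) v = - dotv u v.
Proof. by rewrite -scaleN1r dotvZl mulN1r. Qed.

Lemma dotvNr v u : dotv v (- u) = - dotv v u.
Proof. by rewrite dotvC dotvNl dotvC. Qed.

Lemma dotvBl u w v : dotv (u - w) v = dotv u v - dotv w v.
Proof. by rewrite dotvDl dotvNl. Qed.

Lemma dotv0l v : dotv 0 v = 0.
Proof. by rewrite -(scale0r 0) dotvZl mul0r. Qed.

Lemma dotv_mulmxr {p} (A : 'M[R]_(p, n)) (u : 'cV[R]_p) v :
  dotv u (A *m v) = dotv (A^T *m u) v.
Proof. by rewrite /dotv trmx_mul trmxK mulmxA. Qed.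

Lemma sqnorm_ge0 u : 0 <= sqnorm u.
Proof. by rewrite /sqnorm dotvE sumr_ge0 // => i _; rewrite -expr2 sqr_ge0. Qed.

Lemma sqnorm_eq0 u : (sqnorm u == 0) = (u == 0).
Proof.
apply/idP/eqP => [|->]; last by rewrite /sqnorm dotv0l.
rewrite /sqnorm dotvE psumr_eq0 => [/allP u0|i _]; last by rewrite -expr2 sqr_ge0.
apply/matrixP => i j; rewrite ord1 mxE.
by apply/eqP; rewrite -sqrf_eq0 expr2 (eqP (u0 i (mem_index_enum _))).
Qed.

Lemma sqnorm_pmul_le0_eq0 {c : R} {u} : 0 < c -> c * sqnorm u <= 0 -> u = 0.
Proof.
move=> c_gt0; rewrite pmulr_rle0 // => sq_le0; apply/eqP.
by rewrite -sqnorm_eq0 eq_le sq_le0 sqnorm_ge0.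
Qed.

(* The cross term of [0 <= sqnorm (zeta *: e + r)] gives the bound. *)
Lemma neg_dotv_le_sqnorm (zeta : R) (r e : 'cV[R]_n) : 0 < zeta ->
  zeta * sqnorm e <= - dotv r e -> - dotv r e <= zeta^-1 * sqnorm r.
Proof.
move=> zeta_gt0 coercive; rewrite ler_pdivlMl //.
have := sqnorm_ge0 (zeta *: e + r).
rewrite /sqnorm dotvDl !dotvDr !dotvZl !dotvZr (dotvC e r) -/(sqnorm e) -/(sqnorm r).
have : zeta * (zeta * sqnorm e) <= zeta * (- dotv r e) by rewrite ler_pM2l.
lra.
Qed.

End InnerProduct.

Lemma unitmx_ker0 {R : fieldType} {n : nat} (A : 'M[R]_n) :
  (forall v : 'cV[R]_n, A *m v = 0 -> v = 0) -> A \in unitmx.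
Proof.
move=> A_inj; rewrite -unitmx_tr -row_free_unit -kermx_eq0.
apply/eqP/row_matrixP => i; rewrite row0.
have /(congr1 trmx) : row i (kermx A^T) *m A^T = 0 by rewrite -row_mul mulmx_ker row0.
by rewrite trmx_mul trmxK trmx0 => /A_inj/(congr1 trmx); rewrite trmxK trmx0.
Qed.

Section KKTSystem.
Context {R : realType} {n m : nat} (A : 'M[R]_n) (J : 'M[R]_(m, n)).

Definition kkt_matrix : 'M[R]_(n + m) := block_mx A J^T J 0.

Lemma kkt_matrix_unit :
  (forall u, J *m u = 0 -> dotv u (A *m u) = 0 -> u = 0) ->
  (forall v : 'cV[R]_m, J^T *m v = 0 -> v = 0) ->
  kkt_matrix \in unitmx.
Proof.
move=> A_nondeg JT_inj; apply: unitmx_ker0 => uv.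
rewrite -[uv]vsubmxK mul_block_col -col_mx0 mul0mx addr0.
move=> /eq_col_mx[Au_JTv Ju].
have u0 : usubmx uv = 0.
  apply: A_nondeg => //; rewrite (_ : A *m _ = - (J^T *m dsubmx uv)).
    by rewrite dotvNr dotv_mulmxr trmxK Ju dotv0l oppr0.
  by apply/eqP; rewrite -addr_eq0 Au_JTv.
rewrite u0 (JT_inj (dsubmx uv)) ?col_mx0 //.
by rewrite u0 mulmx0 add0r in Au_JTv.
Qed.

Hypothesis K_unit : kkt_matrix \in unitmx.

Lemma kkt_solve_homogeneous (u r : 'cV[R]_n) (v : 'cV[R]_m) :
  A *m u + J^T *m v = r -> J *m u = 0 -> u = ulsubmx (invmx kkt_matrix) *m r.
Proof.
move=> Auv Ju.
have : kkt_matrix *m col_mx u v = col_mx r 0.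
  by rewrite mul_block_col mul0mx addr0 Auv Ju.
move/(congr1 (mulmx (invmx kkt_matrix))); rewrite mulKmx //.
rewrite -{1}[invmx _]submxK mul_block_col => /(congr1 usubmx).
by rewrite !col_mxKu mulmx0 addr0.
Qed.

Hypothesis A_sym : A^T = A.

Context {g d gb db : 'cV[R]_n} {y yb : 'cV[R]_m}.
Hypotheses (kkt_d : A *m d + J^T *m y = - g) (kkt_db : A *m db + J^T *m yb = - gb).
Hypothesis same_feas : J *m db = J *m d.

Let W := ulsubmx (invmx kkt_matrix).
Let Q := dotv (db - d) (A *m (db - d)).

Let step_err_ker : J *m (db - d) = 0.
Proof. by rewrite mulmxBr same_feas subrr. Qed.

Let dotv_ker u : dotv (J^T *m u) (db - d) = 0.
Proof. by rewrite dotvC dotv_mulmxr trmxK step_err_ker dotv0l. Qed.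

Lemma kkt_step_err : db - d = - W *m (gb - g).
Proof.
rewrite mulNmx -mulmxN opprB; apply: kkt_solve_homogeneous (yb - y) _ step_err_ker.
by rewrite !mulmxBr addrACA -opprD kkt_db kkt_d opprK addrC.
Qed.

Lemma dotv_noise_step_err : dotv (gb - g) (db - d) = - Q.
Proof.
have -> : gb - g = - (A *m (db - d)) - J^T *m (yb - y).
  by rewrite !mulmxBr !opprB addrACA -opprD kkt_d kkt_db opprK addrC.
by rewrite dotvBl dotv_ker subr0 dotvNl dotvC.
Qed.

Lemma dotv_grad_step_err : dotv g (db - d) = - dotv (W^T *m g) (gb - g).
Proof. by rewrite kkt_step_err mulNmx dotvNr dotv_mulmxr. Qed.

Lemma quad_step_err_dominated {zeta : R} : 0 < zeta ->
  (forall u, J *m u = 0 -> zeta * sqnorm u <= dotv u (A *m u)) ->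
  0 <= Q <= zeta^-1 * sqnorm (gb - g).
Proof.
move=> zeta_gt0 curv.
have coercive : zeta * sqnorm (db - d) <= - dotv (gb - g) (db - d).
  by rewrite dotv_noise_step_err opprK; exact: curv.
rewrite -[Q]opprK -dotv_noise_step_err neg_dotv_le_sqnorm // andbT.
exact: le_trans (mulr_ge0 (ltW zeta_gt0) (sqnorm_ge0 _)) coercive.
Qed.

Lemma dotv_perturbed :
  dotv gb db = dotv g d + dotv (d - W^T *m g) (gb - g) - Q.
Proof.
have {1}-> : gb = g + (gb - g) by rewrite addrC subrK.
have {1}-> : db = d + (db - d) by rewrite addrC subrK.
rewrite (dotvDl g) !(dotvDr _ d (db - d)) dotv_noise_step_err dotv_grad_step_err.
rewrite (dotvC (gb - g) d) dotvBl.
ring.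
Qed.

Lemma quad_perturbed :
  dotv db (A *m db) = dotv d (A *m d) + dotv (2%:R *: (W^T *m g)) (gb - g) + Q.
Proof.
have cross : dotv (A *m d) (db - d) = dotv (W^T *m g) (gb - g).
  rewrite (_ : A *m d = - g - J^T *m y); last by rewrite -kkt_d addrK.
  by rewrite dotvBl dotv_ker subr0 dotvNl dotv_grad_step_err opprK.
have {1 2}-> : db = d + (db - d) by rewrite addrC subrK.
rewrite mulmxDr dotvDl !(dotvDr _ (A *m d)) -/Q dotvZl.
rewrite (dotv_mulmxr A d (db - d)) A_sym (dotvC (db - d) (A *m d)) cross.
ring.
Qed.

End KKTSystem.

Section MeasurableVectors.
Context {d : measure_display} {Omega : measurableType d} {R : realType}.

Definition measurable_cV {n} (X : Omega -> 'cV[R]_n) :=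
  forall i, measurable_fun setT (fun w => X w i 0).

Lemma measurable_cV_subr {n} (X : Omega -> 'cV[R]_n) v :
  measurable_cV X -> measurable_cV (fun w => X w - v).
Proof.
move=> mX i; rewrite (_ : (fun w => _) = (fun w => X w i 0 - v i 0)).
  exact/measurable_funB.
by apply/funext => w; rewrite !mxE.
Qed.

Lemma measurable_cV_mulmx {n p} (A : 'M[R]_(p, n)) (X : Omega -> 'cV[R]_n) :
  measurable_cV X -> measurable_cV (fun w => A *m X w).
Proof.
move=> mX i; rewrite (_ : (fun w => _) = (fun w => \sum_j A i j * X w j 0)).
  by apply: measurable_sum => j; apply: measurable_funM.
by apply/funext => w; rewrite mxE.
Qed.

Lemma measurable_dotv {n} (X Y : Omega -> 'cV[R]_n) :
  measurable_cV X -> measurable_cV Y -> measurable_fun setT (fun w => dotv (X w) (Y w)).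
Proof.
move=> mX mY; rewrite (_ : (fun w => _) = (fun w => \sum_j X w j 0 * Y w j 0)).
  by apply: measurable_sum => j; apply: measurable_funM.
by apply/funext => w; rewrite dotvE.
Qed.

End MeasurableVectors.

Section RealIntegrals.
Context {d : measure_display} {Omega : measurableType d} {R : realType}.
Context {mu : {measure set Omega -> \bar R}}.
Implicit Types f g : Omega -> R.

Lemma EFin_Rintegral f : mu.-integrable setT (EFin \o f) ->
  (\int[mu]_w f w)%:E = (\int[mu]_w (f w)%:E)%E.
Proof. by move=> intf; rewrite fineK // integrable_fin_num. Qed.

Lemma integrable_EFinD {f g} : mu.-integrable setT (EFin \o f) ->
  mu.-integrable setT (EFin \o g) -> mu.-integrable setT (EFin \o (f \+ g)).
Proof. by move=> intf intg; apply: eq_integrable (integrableD _ intf intg). Qed.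

Lemma integrable_EFinZl (k : R) {f} : mu.-integrable setT (EFin \o f) ->
  mu.-integrable setT (EFin \o (fun w => k * f w)).
Proof. by move=> intf; apply: eq_integrable (integrableZl _ k intf). Qed.

Lemma ge0_integrable_le {f} {M : R} : measurable_fun setT f ->
  (forall w, 0 <= f w) -> (\int[mu]_w (f w)%:E <= M%:E)%E -> mu.-integrable setT (EFin \o f).
Proof.
move=> mf f_ge0 intf_le; apply/integrableP; split; first exact/measurable_EFinP.
under eq_integral do rewrite gee0_abs ?lee_fin //.
exact: le_lt_trans intf_le (ltry _).
Qed.

Lemma le_integrable_ge0 {f g} : measurable_fun setT f ->
  (forall w, 0 <= f w <= g w) -> mu.-integrable setT (EFin \o g) ->
  mu.-integrable setT (EFin \o f).
Proof.
move=> mf fg intg; apply: le_integrable intg => //; first exact/measurable_EFinP.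
move=> w _; have /andP[f_ge0 f_le] := fg w.
by rewrite /= lee_fin !ger0_norm // (le_trans f_ge0).
Qed.

Lemma Rintegral_le {f} (M : R) : mu.-integrable setT (EFin \o f) ->
  (\int[mu]_w (f w)%:E <= M%:E)%E -> \int[mu]_w f w <= M.
Proof. by move=> intf; rewrite -lee_fin EFin_Rintegral. Qed.

End RealIntegrals.

Section CenteredNoise.
Context {d : measure_display} {Omega : measurableType d} {R : realType} {n : nat}.
Context {P : probability Omega R} {X : Omega -> 'cV[R]_n} {mean : 'cV[R]_n}.
Hypothesis X_meas : measurable_cV X.
Hypothesis X_int : forall i, P.-integrable setT (fun w => (X w i 0)%:E).
Hypothesis X_mean : forall i, (\int[P]_w (X w i 0)%:E = (mean i 0)%:E)%E.

Let noise_int i : P.-integrable setT (fun w => ((X w - mean) i 0)%:E).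
Proof.
have cst_int := finite_measure_integrable_cst P (mean i 0) measurableT.
by apply: eq_integrable (integrableB _ (X_int i) cst_int) => // w _; rewrite !mxE.
Qed.

Let noise_mean i : (\int[P]_w ((X w - mean) i 0)%:E = 0)%E.
Proof.
under eq_integral do rewrite !mxE EFinB.
rewrite integralB_EFin //; [|exact: X_int|exact: finite_measure_integrable_cst].
(* [setT] lives here in another canonical sort than in [probability_setT],
   so the rewrite needs a contextual pattern. *)
by rewrite X_mean integral_cst // [X in (_ * X)%E]probability_setT mule1 subee.
Qed.

Let dotv_noiseE u : (fun w => (dotv u (X w - mean))%:E) =
  (fun w => \sum_(i < n) (u i 0)%:E * ((X w - mean) i 0)%:E)%E.
Proof. by apply/funext => w; rewrite dotvE -sumEFin; under eq_bigr do rewrite EFinM. Qed.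

Lemma integrable_dotv_noise u :
  P.-integrable setT (EFin \o (fun w => dotv u (X w - mean))).
Proof.
rewrite /comp dotv_noiseE; apply: (integrable_sum measurableT) => i _.
exact: integrableZl.
Qed.

Lemma Rintegral_dotv_noise u : \int[P]_w dotv u (X w - mean) = 0.
Proof.
rewrite /Rintegral dotv_noiseE integral_sum //; last by move=> i; exact: integrableZl.
by rewrite big1 // => i _; rewrite integralZl // noise_mean mule0.
Qed.

Lemma Rintegral_sqnorm_dominated {c M : R} {Q : Omega -> R} : 0 <= c ->
  measurable_fun setT Q -> (forall w, 0 <= Q w <= c * sqnorm (X w - mean)) ->
  (\int[P]_w (sqnorm (X w - mean))%:E <= M%:E)%E ->
  P.-integrable setT (EFin \o Q) /\ 0 <= \int[P]_w Q w <= c * M.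
Proof.
move=> c_ge0 mQ Q_dom sq_le.
have msq : measurable_fun setT (fun w => sqnorm (X w - mean)).
  by apply: measurable_dotv; exact: measurable_cV_subr.
have int_sq := ge0_integrable_le msq (fun w => sqnorm_ge0 _) sq_le.
have int_Q := le_integrable_ge0 mQ Q_dom (integrable_EFinZl c int_sq).
split=> //; apply/andP; split.
  by apply: Rintegral_ge0 => w _; case/andP: (Q_dom w).
apply: (@le_trans _ _ (\int[P]_w (c * sqnorm (X w - mean)))).
  by apply: le_Rintegral => // [|w _]; [exact: integrable_EFinZl|case/andP: (Q_dom w)].
by rewrite RintegralZl // ler_wpM2l // Rintegral_le.
Qed.

Lemma integral_affine_noise {a s : R} {u} {Q f : Omega -> R} :
  P.-integrable setT (EFin \o Q) ->
  (forall w, f w = a + dotv u (X w - mean) + s * Q w) ->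
  (\int[P]_w (f w)%:E = (a + s * \int[P]_w Q w)%:E)%E.
Proof.
move=> intQ /funext ->.
have int_cst : P.-integrable setT (EFin \o cst a).
  exact: finite_measure_integrable_cst.
have int_affine := integrable_EFinD int_cst (integrable_dotv_noise u).
rewrite -EFin_Rintegral; last exact: integrable_EFinD int_affine (integrable_EFinZl s intQ).
rewrite RintegralD //; last exact: integrable_EFinZl.
rewrite RintegralD //; last exact: integrable_dotv_noise.
rewrite Rintegral_cst // [X in fine X]probability_setT Rintegral_dotv_noise.
by rewrite RintegralZl // mulr1 addr0.
Qed.

End CenteredNoise.

Theorem lemma3p8
  (R : realType) (n m : nat)
  (gradf : 'cV[R]_n -> 'cV[R]_n)          (* x |-> grad f(x) *)
  (cfun : 'cV[R]_n -> 'cV[R]_m)           (* x |-> c(x) *)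
  (Jac : 'cV[R]_n -> 'M[R]_(m, n))        (* x |-> grad c(x)^T *)
  (x : nat -> 'cV[R]_n)                   (* iterates x_k *)
  (H : nat -> 'M[R]_n)                    (* matrices H_k *)
  (kappaH zeta sigmaJ M : R)
  (* singular values of J_k = grad c(x_k)^T bounded away from zero *)
  (HsigmaJ : 0 < sigmaJ)
  (HJ : forall k (v : 'cV[R]_m), sigmaJ ^+ 2 * sqnorm v <= sqnorm ((Jac (x k))^T *m v))
  (* Matrix Assumption *)
  (Hzeta : 0 < zeta)
  (Hsym : forall k, (H k)^T = H k)
  (Hbnd : forall k (u : 'cV[R]_n), sqnorm (H k *m u) <= kappaH ^+ 2 * sqnorm u)
  (Hcurv : forall k (u : 'cV[R]_n), Jac (x k) *m u = 0 -> zeta * sqnorm u <= dotv u (H k *m u))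
  (* stochastic gradients: at iteration k, gbar k w is the stochastic gradient
     for the sample w, and P k is the distribution of w given that x_k was reached *)
  (d0 : measure_display) (Omega : measurableType d0)
  (P : nat -> probability Omega R)
  (gbar : nat -> Omega -> 'cV[R]_n)
  (Hmeas : forall k (i : 'I_n), measurable_fun setT (fun w => gbar k w i 0))
  (Hint : forall k (i : 'I_n), (P k).-integrable setT (fun w => (gbar k w i 0)%:E))
  (Hunbiased : forall k (i : 'I_n),
     (\int[P k]_w (gbar k w i 0)%:E = (gradf (x k) i 0)%:E)%E)
  (Hvar : forall k, (\int[P k]_w (sqnorm (gbar k w - gradf (x k)))%:E <= M%:E)%E)
  (* stochastic search directions (dbar_k, ybar_k) *)
  (dbar : nat -> Omega -> 'cV[R]_n) (ybar : nat -> Omega -> 'cV[R]_m)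
  (Hsys1 : forall k w, H k *m dbar k w + (Jac (x k))^T *m ybar k w = - gbar k w)
  (Hsys2 : forall k w, Jac (x k) *m dbar k w = - cfun (x k))
  (Hdnz : forall k w, dbar k w != 0)
  (* deterministic search directions (d_k, y_k) *)
  (d : nat -> 'cV[R]_n) (y : nat -> 'cV[R]_m)
  (Hdsys1 : forall k, H k *m d k + (Jac (x k))^T *m y k = - gradf (x k))
  (Hdsys2 : forall k, Jac (x k) *m d k = - cfun (x k)) :
  forall k : nat,
    ((\int[P k]_w (dotv (gbar k w) (dbar k w))%:E <= (dotv (gradf (x k)) (d k))%:E)
     /\ ((dotv (gradf (x k)) (d k) - zeta^-1 * M)%:E
           <= \int[P k]_w (dotv (gbar k w) (dbar k w))%:E)
     /\ ((dotv (d k) (H k *m d k))%:E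
           <= \int[P k]_w (dotv (dbar k w) (H k *m dbar k w))%:E))%E.
Proof.
move=> k; set g := gradf (x k); set J := Jac (x k); set A := H k.
have K_unit : kkt_matrix A J \in unitmx.
  apply: kkt_matrix_unit => [u Ju uAu0|v JTv0].
    by apply: (sqnorm_pmul_le0_eq0 Hzeta); rewrite -uAu0 Hcurv.
  apply: (sqnorm_pmul_le0_eq0 (exprn_gt0 2 HsigmaJ)).
  by rewrite (le_trans (HJ k v)) // -/J JTv0 /sqnorm dotv0l.
have feas w : J *m dbar k w = J *m d k by rewrite Hsys2 Hdsys2.
pose Q w := dotv (dbar k w - d k) (A *m (dbar k w - d k)).
have Q_dom w : 0 <= Q w <= zeta^-1 * sqnorm (gbar k w - g) :=
  quad_step_err_dominated A J (Hdsys1 k) (Hsys1 k w) (feas w) Hzeta (Hcurv k).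
have mQ : measurable_fun setT Q.
  rewrite /Q; under eq_fun => w do
    rewrite (kkt_step_err A J K_unit (Hdsys1 k) (Hsys1 k w) (feas w)).
  by apply: measurable_dotv; do ?apply: measurable_cV_mulmx; apply: measurable_cV_subr.
have zeta_inv_ge0 : 0 <= zeta^-1 by rewrite invr_ge0 ltW.
have [int_Q /andP[EQ_ge0 EQ_le]] :=
  Rintegral_sqnorm_dominated (Hmeas k) zeta_inv_ge0 mQ Q_dom (Hvar k).
pose W := ulsubmx (invmx (kkt_matrix A J)).
have inner w : dotv (gbar k w) (dbar k w) =
    dotv g (d k) + dotv (d k - W^T *m g) (gbar k w - g) + (-1) * Q w.
  by rewrite (dotv_perturbed A J K_unit (Hdsys1 k) (Hsys1 k w) (feas w)) mulN1r.
have quad w : dotv (dbar k w) (A *m dbar k w) =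
    dotv (d k) (A *m d k) + dotv (2%:R *: (W^T *m g)) (gbar k w - g) + 1 * Q w.
  by rewrite (quad_perturbed A J K_unit (Hsym k) (Hdsys1 k) (Hsys1 k w) (feas w)) mul1r.
rewrite (integral_affine_noise (Hint k) (Hunbiased k) int_Q inner).
rewrite (integral_affine_noise (Hint k) (Hunbiased k) int_Q quad).
by rewrite !lee_fin; split; [|split]; lra.
Qed.
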